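(* For every $v\in\mathbb{C}^n$, the element $g=(\mathrm{J}(1,n),v)\in\mathrm{Aff}(n,\mathbb{C})$ is strongly $c$-reversible.
   Context: $\mathrm{J}(1,n)$ denotes the $n\times n$ Jordan block with $1$ on the diagonal and on the superdiagonal and $0$ elsewhere. $\mathrm{Aff}(n,\mathbb{C})$ is the group of affine maps $z\mapsto Az+v$, written $(A,v)$, with product $(A,v)(B,w)=(AB,Aw+v)$ and identity $e=(I_n,0)$. For $g=(A,v)$ set $\overline{g}=(\overline{A},\overline{v})$. An element $h$ is a coninvolution if $h\overline{h}=e$; $g$ is strongly $c$-reversible if there is a coninvolution $h$ with $hgh^{-1}=\overline{g}^{-1}$. *)

From HB Require Import structures.
From mathcomp Require Import all_boot all_order all_algebra.
From mathcomp Require Import complex.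
From mathcomp Require Import reals.
Set Implicit Arguments. Unset Strict Implicit. Unset Printing Implicit Defensive.
Import Order.TTheory GRing.Theory Num.Theory.
Local Open Scope ring_scope.
Local Open Scope complex_scope.

Definition jordan1 (F : nzRingType) (n : nat) : 'M[F]_n :=
  \matrix_(i < n, j < n) (((i : nat) == j) || ((j : nat) == i.+1))%:R.

(* Elements of Aff(n, C) represented as pairs (A, v) : z |-> A z + v;
   membership in Aff requires A invertible. *)
Definition aff (F : comUnitRingType) (n : nat) := ('M[F]_n * 'cV[F]_n)%type.

Definition aff_in (F : comUnitRingType) n (g : aff F n) : Prop := g.1 \in unitmx.

Definition aff_mul (F : comUnitRingType) n (g h : aff F n) : aff F n :=
  (g.1 *m h.1, g.1 *m h.2 + g.2).

Definition aff_one (F : comUnitRingType) n : aff F n := (1%:M, 0).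

Definition aff_inv (F : comUnitRingType) n (g : aff F n) : aff F n :=
  (invmx g.1, - (invmx g.1 *m g.2)).

Definition aff_conj (R : rcfType) n (g : aff R[i] n) : aff R[i] n :=
  (map_mx (fun z => z^*) g.1, map_mx (fun z => z^*) g.2).

Definition coninvolution (R : rcfType) n (h : aff R[i] n) : Prop :=
  aff_in h /\ aff_mul h (aff_conj h) = aff_one R[i] n.

Definition strongly_c_reversible (R : rcfType) n (g : aff R[i] n) : Prop :=
  exists h : aff R[i] n, coninvolution h /\
    aff_mul (aff_mul h g) (aff_inv h) = aff_inv (aff_conj g).

From HB Require Import structures.
From mathcomp Require Import all_boot all_order all_algebra.
From mathcomp Require Import complex.
From mathcomp Require Import reals.
From mathcomp Require Import ring.
Set Implicit Arguments. Unset Strict Implicit. Unset Printing Implicit Defensive.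
Import GRing.Theory Num.Theory.
Local Open Scope ring_scope.
Local Open Scope complex_scope.

(* Write J = J(1,n) and A for the signed Pascal matrix, A_ij = (-1)^j C(j,i): a real
   involution with J A J = A.  For |l| = 1 the coninvolution (l A, 0) therefore
   c-reverses (J, t) as soon as conj t = -l J A t.  Taking for t a multiple of the real
   (-1)^(n-1)-eigenvector e_n + (-1)^(n-1) J A e_n of the involution J A turns this into
   a condition on l alone, which can be met whatever the last coordinate of t is.
   Conjugating by a translation z |-> z + u then handles (J, t + u - J u), and the
   vectors u - J u are exactly those with last coordinate 0. *)

Local Notation mxconj := (map_mx (fun z => z^*)).

Section SignedPascal.
Variable F : comNzRingType.

Lemma coef_exp_Xadd1 k i : (('X + 1) ^+ k : {poly F})`_i = 'C(k, i)%:R.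
Proof.
rewrite exprD1n coef_sum.
under eq_bigr => l _ do rewrite coefMn coefXn -mulrnA mulnbl eq_sym.
rewrite -natr_sum -big_mkcond big_ord1_eq ltnS; case: leqP => // ltki.
by rewrite bin_small.
Qed.

(* Compare the coefficients of X^i in (-X)^j = (1 - (X + 1))^j. *)
Lemma sum_alt_binom_binom j i :
  \sum_(k < j.+1) (-1) ^+ k * ('C(j, k) * 'C(k, i))%:R = (-1) ^+ i * (i == j)%:R :> F.
Proof.
have -> : (-1) ^+ i * (i == j)%:R = (-1) ^+ j * (i == j)%:R :> F.
  by case: eqP => [->|]; rewrite ?mulr0.
have E : (-1 *: 'X : {poly F}) ^+ j = \sum_(k < j.+1) (-1 *: ('X + 1)) ^+ k *+ 'C(j, k).
  by rewrite !scaleN1r -exprD1n opprD addrNK.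
rewrite -(coefXn F) -coefZ -exprZn E coef_sum; apply: eq_bigr => k _.
by rewrite exprZn coefMn coefZ coef_exp_Xadd1 natrM mulr_natl mulrnAr.
Qed.

(* The matrix of p(x) |-> p(-1-x) in the basis of binomial polynomials C(x, j),
   in which J(1,n) is the matrix of p(x) |-> p(x+1). *)
Definition signed_pascal n : 'M[F]_n := \matrix_(i < n, j < n) ((-1) ^+ j * 'C(j, i)%:R).

Lemma signed_pascal_invol n : signed_pascal n *m signed_pascal n = 1%:M.
Proof.
apply/matrixP => i j; rewrite !mxE.
pose f k : F := (-1) ^+ k * ('C(j, k) * 'C(k, i))%:R.
have -> : \sum_(k < n) signed_pascal n i k * signed_pascal n k j =
    (-1) ^+ j * \sum_(k < j.+1) f k.
  rewrite (big_ord_widen n f (ltn_ord j)) mulr_sumr [RHS]big_mkcond.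
  apply: eq_bigr => k _; rewrite !mxE; case: ltnP => [_|ltjk].
    by rewrite /f natrM; ring.
  by rewrite (bin_small ltjk) !mulr0.
rewrite /f /= sum_alt_binom_binom mulrA -exprD.
rewrite -[i == j]/(i == j :> nat); case: eqP => [->|_]; last by rewrite mulr0.
by rewrite addnn -mul2n exprM sqrrN !expr1n mul1r.
Qed.

Lemma jordan1E n (i j : 'I_n) :
  jordan1 F n i j = (j == i :> nat)%:R + (j == i.+1 :> nat)%:R.
Proof.
rewrite mxE eq_sym; case: eqP => [->|_]; last by rewrite add0r.
by rewrite (ltn_eqF (ltnSn _)) addr0.
Qed.

Lemma sum_jordan1_row n (i : 'I_n) (f : nat -> F) :
  \sum_(k < n) jordan1 F n i k * f k = f i + (if (i.+1 < n)%N then f i.+1 else 0).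
Proof.
under eq_bigr => k _ do rewrite jordan1E mulrDl !mulr_natl !mulrb.
by rewrite big_split /= -!big_mkcond !big_ord1_eq ltn_ord.
Qed.

Lemma sum_jordan1_col n (j : 'I_n) (f : nat -> F) :
  \sum_(k < n) f k * jordan1 F n k j = f j + (if (j : nat) is j'.+1 then f j' else 0).
Proof.
under eq_bigr => k _ do rewrite jordan1E mulrDr !mulr_natr !mulrb.
rewrite big_split /= -!big_mkcond (eq_bigl _ _ (fun k => eq_sym _ _)) big_ord1_eq ltn_ord.
case: (nat_of_ord j) (ltn_ord j) => [|j'] ltjn; first by rewrite big_pred0 ?addr0.
rewrite (eq_bigl _ _ (fun k => eqSS _ _)) (eq_bigl _ _ (fun k => eq_sym _ _)).
by rewrite big_ord1_eq (ltnW ltjn).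
Qed.

Lemma jordan1_signed_pascal n :
  jordan1 F n *m signed_pascal n *m jordan1 F n = signed_pascal n.
Proof.
have JA : jordan1 F n *m signed_pascal n =
    \matrix_(i < n, j < n) ((-1) ^+ j * 'C(j.+1, i.+1)%:R).
  apply/matrixP => i j; rewrite !mxE.
  under eq_bigr => k _ do rewrite [signed_pascal _ _ _]mxE.
  rewrite (sum_jordan1_row i (fun k => (-1) ^+ j * 'C(j, k)%:R)) binS natrD mulrDr addrC.
  case: ltnP => // leni; rewrite [in 'C(j, i.+1)]bin_small ?mulr0 ?add0r //.
  exact: leq_trans (ltn_ord j) leni.
apply/matrixP => i j; rewrite JA !mxE.
under eq_bigr => k _ do rewrite [X in X * _]mxE.
rewrite (sum_jordan1_col j (fun k => (-1) ^+ k * 'C(k.+1, i.+1)%:R)).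
case: (nat_of_ord j) => [|j']; first by rewrite binS !bin0n addr0 add0n.
by rewrite binS natrD exprS; ring.
Qed.

Lemma jordan1_mul_last m k (y : 'M[F]_(m.+1, k)) j :
  (jordan1 F m.+1 *m y) ord_max j = y ord_max j.
Proof.
rewrite mxE (bigD1 ord_max) //= big1 ?addr0 => [|l nel]; rewrite jordan1E.
  by rewrite eqxx (ltn_eqF (ltnSn _)) addr0 mul1r.
rewrite -[(l : nat) == _]/(l == ord_max) (negPf nel) (ltn_eqF (ltn_ord l)).
by rewrite addr0 mul0r.
Qed.

Lemma signed_pascal_mul_last m k (y : 'M[F]_(m.+1, k)) j :
  (signed_pascal m.+1 *m y) ord_max j = (-1) ^+ m * y ord_max j.
Proof.
rewrite mxE (bigD1 ord_max) //= big1 ?addr0 => [|l nel]; rewrite mxE.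
  by rewrite binn mulr1.
have ltlm : (l < m)%N by rewrite ltn_neqAle -ltnS ltn_ord andbT; exact: nel.
by rewrite bin_small // mulr0 mul0r.
Qed.

Lemma range_sub_jordan1 m (z : 'cV[F]_m.+1) :
  z ord_max 0 = 0 -> exists u, u - jordan1 F m.+1 *m u = z.
Proof.
move=> z0; pose g k := if k is k'.+1 then - z (inord k') 0 else 0.
exists (\col_i g i); apply/matrixP => i j; rewrite ord1.
have Ju : (jordan1 F m.+1 *m \col_k g k) i 0 =
    g i + (if (i.+1 < m.+1)%N then g i.+1 else 0).
  rewrite mxE -(sum_jordan1_row i g).
  by apply: eq_bigr => k _; congr (_ * _); rewrite mxE.
rewrite mxE [X in _ + X]mxE Ju mxE opprD addrA subrr add0r.
case: ifP => [_|]; first by rewrite opprK inord_val.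
rewrite oppr0 ltnS => /negbT; rewrite -leqNgt => lemi.
suff -> : i = ord_max by rewrite z0.
by apply/val_inj/eqP; rewrite /= eqn_leq lemi andbT -ltnS.
Qed.

End SignedPascal.

Lemma map_jordan1 (F F' : nzRingType) (f : {rmorphism F -> F'}) n :
  map_mx f (jordan1 F n) = jordan1 F' n.
Proof. by apply/matrixP => i j; rewrite !mxE rmorph_nat. Qed.

Lemma map_signed_pascal (F F' : comNzRingType) (f : {rmorphism F -> F'}) n :
  map_mx f (signed_pascal F n) = signed_pascal F' n.
Proof. by apply/matrixP => i j; rewrite !mxE rmorphM rmorphXn rmorphN1 rmorph_nat. Qed.

Section StronglyCReversible.
Variables (R : rcfType) (n : nat).

Lemma mxconjK m k (X : 'M[R[i]]_(m, k)) : mxconj (mxconj X) = X.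
Proof. by apply/matrixP => i j; rewrite !mxE conjcK. Qed.

(* The hypotheses say that h = (B, w) satisfies h conj(h) = e and
   conj(g) h g = h for g = (M, v). *)
Lemma strongly_c_reversible_of (M B : 'M[R[i]]_n) (v w : 'cV[R[i]]_n) :
  B *m mxconj B = 1%:M -> B *m mxconj w + w = 0 ->
  mxconj M *m B *m M = B -> mxconj M *m (B *m v + w) + mxconj v = w ->
  strongly_c_reversible (M, v).
Proof.
move=> BBc Bw MBM Mv; exists (B, w); split; first split.
- by case: (mulmx1_unit BBc).
- by rewrite /aff_mul /= BBc Bw.
have [uB _] := mulmx1_unit BBc.
have invB : invmx B = mxconj B by rewrite -[LHS]mulmx1 -BBc mulKmx.
have MBMc : mxconj M *m (B *m M *m mxconj B) = 1%:M by rewrite !mulmxA MBM.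
have [uMc _] := mulmx1_unit MBMc.
have invMc : invmx (mxconj M) = B *m M *m mxconj B.
  by rewrite -[LHS]mulmx1 -MBMc mulKmx.
rewrite /aff_mul /aff_inv /aff_conj /= invB invMc; congr pair.
apply: (can_inj (mulKmx uMc)); rewrite !(mulmxDr, mulmxN, mulmxA) MBM BBc mul1mx.
by rewrite mul1mx -[in - w]Mv mulmxDr mulmxA opprD addrAC addNr add0r.
Qed.

(* Conjugating the reversor (B, 0) of (M, t) by the translation z |-> z + u. *)
Lemma strongly_c_reversible_translate (M B : 'M[R[i]]_n) (t u : 'cV[R[i]]_n) :
  B *m mxconj B = 1%:M -> mxconj M *m B *m M = B ->
  mxconj M *m (B *m t) + mxconj t = 0 ->
  strongly_c_reversible (M, t + u - M *m u).
Proof.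
move=> BBc MBM Mt; apply: (@strongly_c_reversible_of M B _ (mxconj u - B *m u)) => //.
  by rewrite map_mxB map_mxM mxconjK mulmxBr mulmxA BBc mul1mx addrC addrA subrK subrr.
have {}Mt : mxconj t = - (mxconj M *m B *m t).
  by apply/eqP; rewrite -addr_eq0 addrC -mulmxA Mt.
rewrite !(map_mxD, map_mxN, map_mxM) !(mulmxDr, mulmxN) !mulmxA MBM Mt.
move: (mxconj M *m B *m t) (mxconj M *m B *m u) (B *m u) (mxconj M *m mxconj u).
by move=> a b c d; apply/matrixP => i j; rewrite !mxE; ring.
Qed.

End StronglyCReversible.

Lemma unimodular_conj_ratio (R : rcfType) (c : R[i]) :
  exists2 l : R[i], l * l^*%C = 1 & l * c = c^*%C.
Proof.
have [->|c0] := eqVneq c 0; first by exists 1; rewrite ?conjc0 ?mulr0 // rmorph1 mulr1.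
have cc0 : c^* != 0 by rewrite conjc_eq0.
exists (c^*%C / c); last by rewrite divfK.
by rewrite rmorphM fmorphV /= conjcK mulrA divfK // divff.
Qed.

Lemma jordan1_c_reversor (R : rcfType) m (c : R[i]) :
  exists (B : 'M[R[i]]_m.+1) (t : 'cV[R[i]]_m.+1),
    [/\ B *m mxconj B = 1%:M, mxconj (jordan1 R[i] m.+1) *m B *m jordan1 R[i] m.+1 = B,
         mxconj (jordan1 R[i] m.+1) *m (B *m t) + mxconj t = 0 & t ord_max 0 = c].
Proof.
pose J := jordan1 R[i] m.+1; pose A := signed_pascal R[i] m.+1.
pose sgn : R[i] := (-1) ^+ m.
have sgn2 : sgn * sgn = 1 by rewrite -expr2 sqrr_sign.
have sgnR : sgn^*%C = sgn by rewrite rmorphXn rmorphN1.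
pose e : 'cV[R[i]]_m.+1 := delta_mx ord_max 0.
pose s := e + sgn *: (J *m A *m e).
have Ps : J *m A *m s = sgn *: s.
  have PP : J *m A *m (J *m A) = 1%:M.
    by rewrite mulmxA jordan1_signed_pascal signed_pascal_invol.
  by rewrite mulmxDr -scalemxAr mulmxA PP mul1mx scalerDr scalerA sgn2 scale1r addrC.
have sR : mxconj s = s.
  by rewrite map_mxD map_mxZ !map_mxM map_jordan1 map_signed_pascal map_delta_mx /= sgnR.
have [l ll lc] := unimodular_conj_ratio c.
exists ((- sgn * l) *: A), ((c / 2) *: s); split.
- rewrite map_mxZ map_signed_pascal -scalemxAl -scalemxAr scalerA signed_pascal_invol.
  by rewrite rmorphM rmorphN /= sgnR mulrACA mulrNN sgn2 ll mulr1 scale1r.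
- by rewrite map_jordan1 -scalemxAr -scalemxAl jordan1_signed_pascal.
- rewrite map_jordan1 map_mxZ sR -scalemxAl -!scalemxAr mulmxA Ps.
  rewrite !scalerA -scalerDl rmorphM fmorphV rmorph_nat /= -lc.
  suff -> : - sgn * l * (c / 2) * sgn + l * c / 2 = (1 - sgn * sgn) * (l * c / 2).
    by rewrite sgn2 subrr mul0r scale0r.
  by ring.
rewrite mxE [s _ _]mxE [X in _ * (_ + X)]mxE -mulmxA.
rewrite jordan1_mul_last signed_pascal_mul_last !mxE eqxx mulr1 sgn2 /=.
by rewrite -mulr2n divfK // pnatr_eq0.
Qed.

Theorem lemma3p5 (R : realType) (n : nat) (v : 'cV[R[i]]_n) :
  strongly_c_reversible (jordan1 R[i] n, v).
Proof.
case: n v => [|m] v.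
  have -> : v = 0 + 0 - jordan1 R[i] 0 *m 0 by apply/matrixP => -[].
  by apply: (@strongly_c_reversible_translate _ _ _ 1%:M) => //; apply/matrixP => -[].
have [B [t [BBc JBJ Jt tc]]] := jordan1_c_reversor m (v ord_max 0).
have [u uE] : exists u, u - jordan1 R[i] m.+1 *m u = v - t.
  by apply: range_sub_jordan1; rewrite mxE [X in _ + X]mxE tc subrr.
have -> : v = t + u - jordan1 R[i] m.+1 *m u by rewrite -addrA uE addrC subrK.
exact: strongly_c_reversible_translate BBc JBJ Jt.
Qed.
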